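(* Let a Cartesian mesh with cells $I_{ij}$ of sizes $\Delta x_i,\Delta y_j$ and cell averages $\overline{\bm{U}}^n_{ij}\in\mathcal{G}$ be given, and let $\Delta t^n\le\frac14\min_{i,j}\big(\Delta x_i/\alpha^n_{i+\frac12,j},\ \Delta y_j/\beta^n_{i,j+\frac12}\big)$. Let $\widehat{\bm{F}}^{\rm high}_{i+\frac12,j},\widehat{\bm{G}}^{\rm high}_{i,j+\frac12}\in\mathbb{R}^4$ be the high-order numerical fluxes, and let $\widehat{\bm{F}}^{\rm low},\widehat{\bm{G}}^{\rm low}$, the limited fluxes $\widehat{\bm{F}}^{\rm PCP},\widehat{\bm{G}}^{\rm PCP}$ and the states $\bm{U}^{\pm,\rm low}_{ij},\widetilde{\bm{U}}^{\pm,\rm low}_{ij}$ be as in the context. Assume $\bm{U}^{\pm,\rm low}_{ij},\widetilde{\bm{U}}^{\pm,\rm low}_{ij}\in\mathcal{G}$ for all $i,j$. Then for the scheme $$\overline{\bm{U}}^{n+1}_{ij}=\overline{\bm{U}}^n_{ij}-\frac{\Delta t^n}{\Delta x_i}\big(\widehat{\bm{F}}^{\rm PCP}_{i+\frac12,j}-\widehat{\bm{F}}^{\rm PCP}_{i-\frac12,j}\big)-\frac{\Delta t^n}{\Delta y_j}\big(\widehat{\bm{G}}^{\rm PCP}_{i,j+\frac12}-\widehat{\bm{G}}^{\rm PCP}_{i,j-\frac12}\big)$$ one has, for all $i,j$, $$\overline{\bm{U}}^{n+1}_{ij}=\tfrac14\big(\bm{U}^{+,\rm PCP}_{ij}+\bm{U}^{-,\rm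 PCP}_{ij}+\widetilde{\bm{U}}^{+,\rm PCP}_{ij}+\widetilde{\bm{U}}^{-,\rm PCP}_{ij}\big)\in\mathcal{G},$$ where $\bm{U}^{\pm,\rm PCP}_{ij}=\overline{\bm{U}}^n_{ij}\mp\frac{4\Delta t^n}{\Delta x_i}\widehat{\bm{F}}^{\rm PCP}_{i\pm\frac12,j}$ and $\widetilde{\bm{U}}^{\pm,\rm PCP}_{ij}=\overline{\bm{U}}^n_{ij}\mp\frac{4\Delta t^n}{\Delta y_j}\widehat{\bm{G}}^{\rm PCP}_{i,j\pm\frac12}$.
   Context: Setting: 2D special relativistic hydrodynamics ($c=1$), $\bm{U}_t+\bm{F}(\bm{U})_x+\bm{G}(\bm{U})_y=0$ with $\bm{U}=(D,\bm{m},E)^T$, $D=\rho\gamma$, $\bm{m}=\rho h\gamma^2\bm{u}$, $E=\rho h\gamma^2-p$, $h=1+e+p/\rho$, $p=(\Gamma-1)\rho e$, $\Gamma\in(1,2]$, $\gamma=(1-|\bm{u}|^2)^{-1/2}$, $\bm{F}=(Du_1,\bm{m}u_1+p\bm{e}_1,(E+p)u_1)^T$, $\bm{G}=(Du_2,\bm{m}u_2+p\bm{e}_2,(E+p)u_2)^T$. Admissible set $\mathcal{G}=\{\bm{U}: D>0,\ q(\bm{U})>0\}$ with $q(\bm{U})=E-\sqrt{D^2+|\bm{m}|^2}$. $\varrho^x,\varrho^y$ denote the spectral radii of $\partial\bm{F}/\partial\bm{U}$, $\partial\bm{G}/\partial\bm{U}$; $\alpha^n_{i+\frac12,j}=\max\{\varrho^x(\overline{\bm{U}}^n_{i+1,j}),\varrho^x(\overline{\bm{U}}^n_{ij})\}$,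 $\beta^n_{i,j+\frac12}=\max\{\varrho^y(\overline{\bm{U}}^n_{i,j+1}),\varrho^y(\overline{\bm{U}}^n_{ij})\}$. Low-order fluxes: $\widehat{\bm{F}}^{\rm low}_{i+\frac12,j}=\frac12\big(\bm{F}(\overline{\bm{U}}^n_{ij})+\bm{F}(\overline{\bm{U}}^n_{i+1,j})-\alpha^n_{i+\frac12,j}(\overline{\bm{U}}^n_{i+1,j}-\overline{\bm{U}}^n_{ij})\big)$, $\widehat{\bm{G}}^{\rm low}_{i,j+\frac12}$ analogous with $\bm{G}$, $\overline{\bm{U}}^n_{i,j+1}$, $\beta^n_{i,j+\frac12}$. The high-order fluxes $\widehat{\bm{F}}^{\rm high},\widehat{\bm{G}}^{\rm high}$ are given vectors (in the paper obtained by Gauss–Lobatto quadrature of 1D and 2D HLL fluxes evaluated at WENO-reconstructed states). For $\ast\in\{\rm low,high,D\}$ define $\bm{U}^{\pm,\ast}_{ij}=\overline{\bm{U}}^n_{ij}\mp\frac{4\Delta t^n}{\Delta x_i}\widehat{\bm{F}}^{\ast}_{i\pm\frac12,j}$, $\widetilde{\bm{U}}^{\pm,\ast}_{ij}=\overline{\bm{U}}^n_{ij}\mp\frac{4\Delta t^n}{\Delta y_j}\widehat{\bm{G}}^{\ast}_{i,j\pm\frac12}$, and write $D^{\pm,\ast}_{ij}$, $\widetilde D^{\pm,\ast}_{ij}$ for their first components. Fix $\varepsilon_D,\varepsilon_q>0$ with $D^{\pm,\rm low}_{ij},\widetilde D^{\pm,\rm low}_{ij}\ge\varepsilon_D$ and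 $q(\bm{U}^{\pm,\rm low}_{ij}),q(\widetilde{\bm{U}}^{\pm,\rm low}_{ij})\ge\varepsilon_q$ for all $i,j$. Limiter step (i): $\theta^{D,x,\pm}_{i+\frac12,j}=\frac{D^{\pm,\rm low}_{i+\frac12\mp\frac12,j}-\varepsilon_D}{D^{\pm,\rm low}_{i+\frac12\mp\frac12,j}-D^{\pm,\rm high}_{i+\frac12\mp\frac12,j}}$ if $D^{\pm,\rm high}_{i+\frac12\mp\frac12,j}<\varepsilon_D$ and $1$ otherwise (here $i+\frac12-\frac12=i$, $i+\frac12+\frac12=i+1$); $\theta^{D,x}_{i+\frac12,j}=\min\{\theta^{D,x,+}_{i+\frac12,j},\theta^{D,x,-}_{i+\frac12,j}\}$; $\widehat{\bm{F}}^{\rm D}_{i+\frac12,j}$ has first component $(1-\theta^{D,x}_{i+\frac12,j})\{\widehat{\bm{F}}^{\rm low}_{i+\frac12,j}\}_1+\theta^{D,x}_{i+\frac12,j}\{\widehat{\bm{F}}^{\rm high}_{i+\frac12,j}\}_1$ and other components equal to those of $\widehat{\bm{F}}^{\rm high}_{i+\frac12,j}$. $\theta^{D,y,\pm}_{i,j+\frac12}$, $\theta^{D,y}_{i,j+\frac12}$, $\widehat{\bm{G}}^{\rm D}_{i,j+\frac12}$ are defined analogously with $\widetilde D$, index $j$ and $\widehat{\bm{G}}$. Limiter step (ii): $\theta^{q,x,\pm}_{i+\frac12,j}=\frac{q(\bm{U}^{\pm,\rm low}_{i+\frac12\mp\frac12,j})-\varepsilon_q}{q(\bm{U}^{\pm,\rm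 low}_{i+\frac12\mp\frac12,j})-q(\bm{U}^{\pm,\rm D}_{i+\frac12\mp\frac12,j})}$ if $q(\bm{U}^{\pm,\rm D}_{i+\frac12\mp\frac12,j})<\varepsilon_q$ and $1$ otherwise; $\theta^{q,x}_{i+\frac12,j}=\min\{\theta^{q,x,+},\theta^{q,x,-}\}$; $\widehat{\bm{F}}^{\rm PCP}_{i+\frac12,j}=(1-\theta^{q,x}_{i+\frac12,j})\widehat{\bm{F}}^{\rm low}_{i+\frac12,j}+\theta^{q,x}_{i+\frac12,j}\widehat{\bm{F}}^{\rm D}_{i+\frac12,j}$; $\widehat{\bm{G}}^{\rm PCP}_{i,j+\frac12}$ analogously with $\widetilde{\bm{U}}$, $\widehat{\bm{G}}$. *)

From Stdlib Require Import Reals Lra ZArith.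
Open Scope R_scope.

Record state := mkState { sD : R; sm1 : R; sm2 : R; sE : R }.

Definition sadd (a b : state) : state :=
  mkState (sD a + sD b) (sm1 a + sm1 b) (sm2 a + sm2 b) (sE a + sE b).
Definition sscale (c : R) (a : state) : state :=
  mkState (c * sD a) (c * sm1 a) (c * sm2 a) (c * sE a).
Definition ssub (a b : state) : state := sadd a (sscale (-1) b).

Definition qfun (U : state) : R :=
  sE U - sqrt (sD U ^ 2 + sm1 U ^ 2 + sm2 U ^ 2).
Definition inG (U : state) : Prop := 0 < sD U /\ 0 < qfun U.

Record prim := mkPrim { prho : R; pu1 : R; pu2 : R; pp : R }.

Definition prim_admissible (W : prim) : Prop :=
  0 < prho W /\ 0 < pp W /\ pu1 W ^ 2 + pu2 W ^ 2 < 1.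

Definition lorentz (W : prim) : R := / sqrt (1 - (pu1 W ^ 2 + pu2 W ^ 2)).
Definition int_energy (Gam : R) (W : prim) : R := pp W / ((Gam - 1) * prho W).
Definition enthalpy (Gam : R) (W : prim) : R :=
  1 + int_energy Gam W + pp W / prho W.

Definition cons (Gam : R) (W : prim) : state :=
  let g := lorentz W in let h := enthalpy Gam W in
  mkState (prho W * g)
          (prho W * h * g ^ 2 * pu1 W)
          (prho W * h * g ^ 2 * pu2 W)
          (prho W * h * g ^ 2 - pp W).

Definition fluxF (Gam : R) (W : prim) : state :=
  let U := cons Gam W in
  mkState (sD U * pu1 W) (sm1 U * pu1 W + pp W) (sm2 U * pu1 W)
          ((sE U + pp W) * pu1 W).
Definition fluxG (Gam : R) (W : prim) : state :=
  let U := cons Gam W in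
  mkState (sD U * pu2 W) (sm1 U * pu2 W) (sm2 U * pu2 W + pp W)
          ((sE U + pp W) * pu2 W).

(** Spectral radius of dF/dU in direction with normal velocity un and
    tangential velocity ut: the eigenvalues are un (double) and
    (un (1-cs^2) +- cs sqrt((1-|u|^2)(1 - un^2 - ut^2 cs^2))) / (1 - |u|^2 cs^2),
    with cs^2 = Gamma p / (rho h) the squared sound speed. *)
Definition sound2 (Gam : R) (W : prim) : R := Gam * pp W / (prho W * enthalpy Gam W).
Definition specrad_dir (Gam : R) (W : prim) (un ut : R) : R :=
  let c2 := sound2 Gam W in let cs := sqrt c2 in
  let v2 := un ^ 2 + ut ^ 2 in
  let rt := sqrt ((1 - v2) * (1 - un ^ 2 - ut ^ 2 * c2)) in
  let lp := (un * (1 - c2) + cs * rt) / (1 - v2 * c2) in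
  let lm := (un * (1 - c2) - cs * rt) / (1 - v2 * c2) in
  Rmax (Rabs un) (Rmax (Rabs lp) (Rabs lm)).
Definition specrad_x (Gam : R) (W : prim) : R := specrad_dir Gam W (pu1 W) (pu2 W).
Definition specrad_y (Gam : R) (W : prim) : R := specrad_dir Gam W (pu2 W) (pu1 W).

(** Data of one time step on an (infinite) Cartesian mesh indexed by Z x Z.
    Face i+1/2 (between cells i and i+1) is indexed by i; face j+1/2 by j. *)
Record step_data := mkStep {
  Gam : R;
  dx : Z -> R; dy : Z -> R; dt : R;
  Wbar : Z -> Z -> prim;
  Ubar : Z -> Z -> state;
  Fhigh : Z -> Z -> state;
  Ghigh : Z -> Z -> state;
  epsD : R; epsq : R }.

Section Scheme.
Variable S : step_data.

Definition alpha (i j : Z) : R :=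
  Rmax (specrad_x (Gam S) (Wbar S (i + 1)%Z j)) (specrad_x (Gam S) (Wbar S i j)).
Definition beta (i j : Z) : R :=
  Rmax (specrad_y (Gam S) (Wbar S i (j + 1)%Z)) (specrad_y (Gam S) (Wbar S i j)).

Definition Flow (i j : Z) : state :=
  sscale (1/2) (ssub (sadd (fluxF (Gam S) (Wbar S i j)) (fluxF (Gam S) (Wbar S (i+1)%Z j)))
                     (sscale (alpha i j) (ssub (Ubar S (i+1)%Z j) (Ubar S i j)))).
Definition Glow (i j : Z) : state :=
  sscale (1/2) (ssub (sadd (fluxG (Gam S) (Wbar S i j)) (fluxG (Gam S) (Wbar S i (j+1)%Z)))
                     (sscale (beta i j) (ssub (Ubar S i (j+1)%Z) (Ubar S i j)))).

Definition Uplus (Fs : Z -> Z -> state) (i j : Z) : state :=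
  ssub (Ubar S i j) (sscale (4 * dt S / dx S i) (Fs i j)).
Definition Uminus (Fs : Z -> Z -> state) (i j : Z) : state :=
  sadd (Ubar S i j) (sscale (4 * dt S / dx S i) (Fs (i - 1)%Z j)).
Definition Utplus (Gs : Z -> Z -> state) (i j : Z) : state :=
  ssub (Ubar S i j) (sscale (4 * dt S / dy S j) (Gs i j)).
Definition Utminus (Gs : Z -> Z -> state) (i j : Z) : state :=
  sadd (Ubar S i j) (sscale (4 * dt S / dy S j) (Gs i (j - 1)%Z)).

Definition theta_coef (eps alow a : R) : R :=
  if Rlt_dec a eps then (alow - eps) / (alow - a) else 1.

Definition thetaDx (i j : Z) : R :=
  Rmin (theta_coef (epsD S) (sD (Uplus Flow i j)) (sD (Uplus (Fhigh S) i j)))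
       (theta_coef (epsD S) (sD (Uminus Flow (i+1)%Z j)) (sD (Uminus (Fhigh S) (i+1)%Z j))).
Definition thetaDy (i j : Z) : R :=
  Rmin (theta_coef (epsD S) (sD (Utplus Glow i j)) (sD (Utplus (Ghigh S) i j)))
       (theta_coef (epsD S) (sD (Utminus Glow i (j+1)%Z)) (sD (Utminus (Ghigh S) i (j+1)%Z))).

Definition FD (i j : Z) : state :=
  let H := Fhigh S i j in
  mkState ((1 - thetaDx i j) * sD (Flow i j) + thetaDx i j * sD H) (sm1 H) (sm2 H) (sE H).
Definition GD (i j : Z) : state :=
  let H := Ghigh S i j in
  mkState ((1 - thetaDy i j) * sD (Glow i j) + thetaDy i j * sD H) (sm1 H) (sm2 H) (sE H).

Definition thetaqx (i j : Z) : R :=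
  Rmin (theta_coef (epsq S) (qfun (Uplus Flow i j)) (qfun (Uplus FD i j)))
       (theta_coef (epsq S) (qfun (Uminus Flow (i+1)%Z j)) (qfun (Uminus FD (i+1)%Z j))).
Definition thetaqy (i j : Z) : R :=
  Rmin (theta_coef (epsq S) (qfun (Utplus Glow i j)) (qfun (Utplus GD i j)))
       (theta_coef (epsq S) (qfun (Utminus Glow i (j+1)%Z)) (qfun (Utminus GD i (j+1)%Z))).

Definition FPCP (i j : Z) : state :=
  sadd (sscale (1 - thetaqx i j) (Flow i j)) (sscale (thetaqx i j) (FD i j)).
Definition GPCP (i j : Z) : state :=
  sadd (sscale (1 - thetaqy i j) (Glow i j)) (sscale (thetaqy i j) (GD i j)).

Definition Unew (i j : Z) : state :=
  ssub (ssub (Ubar S i j)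
             (sscale (dt S / dx S i) (ssub (FPCP i j) (FPCP (i - 1)%Z j))))
       (sscale (dt S / dy S j) (ssub (GPCP i j) (GPCP i (j - 1)%Z))).

End Scheme.

(** The admissible set is a convex cone: [q] is positively homogeneous and
    superadditive, hence concave.  Each of the four limited states
    [U^{±,PCP}], [Ũ^{±,PCP}] is the convex combination
    [(1 - θ^q) U^{low} + θ^q U^{D}] of the corresponding low-order state and
    the density-limited state.  The coefficient [θ^D] is chosen so that the
    density of [U^{D}], which depends affinely on [θ^D], stays above [ε_D];
    the coefficient [θ^q] is chosen so that the affine lower bound
    [(1 - θ^q) q(U^{low}) + θ^q q(U^{D})] of [q] stays above [ε_q].  The
    update is the average of the four limited states.  The CFL condition and
    the physical hypotheses enter only through the assumed bounds on the
    low-order states. *)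

From Stdlib Require Import Reals ZArith Lra.
Open Scope R_scope.

Definition sblend (t : R) (a b : state) : state :=
  sadd (sscale (1 - t) a) (sscale t b).

Lemma sum3_sqr_ge0 (a1 a2 a3 : R) : 0 <= a1 ^ 2 + a2 ^ 2 + a3 ^ 2.
Proof. pose proof (pow2_ge_0 a1); pose proof (pow2_ge_0 a2); pose proof (pow2_ge_0 a3); lra. Qed.

Lemma cauchy_schwarz3 (a1 a2 a3 b1 b2 b3 : R) :
  a1 * b1 + a2 * b2 + a3 * b3 <=
  sqrt (a1 ^ 2 + a2 ^ 2 + a3 ^ 2) * sqrt (b1 ^ 2 + b2 ^ 2 + b3 ^ 2).
Proof.
  destruct (Rle_dec (a1 * b1 + a2 * b2 + a3 * b3) 0) as [Hneg | Hpos].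
  - pose proof (sqrt_pos (a1 ^ 2 + a2 ^ 2 + a3 ^ 2)).
    pose proof (sqrt_pos (b1 ^ 2 + b2 ^ 2 + b3 ^ 2)). nra.
  - rewrite <- sqrt_mult by apply sum3_sqr_ge0.
    rewrite <- (sqrt_pow2 (a1 * b1 + a2 * b2 + a3 * b3)) by lra.
    apply sqrt_le_1_alt.
    (* Lagrange's identity *)
    pose proof (pow2_ge_0 (a1 * b2 - a2 * b1)).
    pose proof (pow2_ge_0 (a1 * b3 - a3 * b1)).
    pose proof (pow2_ge_0 (a2 * b3 - a3 * b2)). lra.
Qed.

Lemma sqrt_sum3_triangle (a1 a2 a3 b1 b2 b3 : R) :
  sqrt ((a1 + b1) ^ 2 + (a2 + b2) ^ 2 + (a3 + b3) ^ 2) <=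
  sqrt (a1 ^ 2 + a2 ^ 2 + a3 ^ 2) + sqrt (b1 ^ 2 + b2 ^ 2 + b3 ^ 2).
Proof.
  pose proof (sqrt_pos (a1 ^ 2 + a2 ^ 2 + a3 ^ 2)).
  pose proof (sqrt_pos (b1 ^ 2 + b2 ^ 2 + b3 ^ 2)).
  pose proof (cauchy_schwarz3 a1 a2 a3 b1 b2 b3).
  pose proof (sqrt_sqrt _ (sum3_sqr_ge0 a1 a2 a3)).
  pose proof (sqrt_sqrt _ (sum3_sqr_ge0 b1 b2 b3)).
  rewrite <- (sqrt_pow2 (sqrt (a1 ^ 2 + a2 ^ 2 + a3 ^ 2) + sqrt (b1 ^ 2 + b2 ^ 2 + b3 ^ 2)))
    by lra.
  apply sqrt_le_1_alt. nra.
Qed.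

Lemma qfun_superadditive (a b : state) : qfun a + qfun b <= qfun (sadd a b).
Proof.
  destruct a as [a1 a2 a3 a4], b as [b1 b2 b3 b4]; unfold qfun, sadd; cbn [sD sm1 sm2 sE].
  pose proof (sqrt_sum3_triangle a1 a2 a3 b1 b2 b3). lra.
Qed.

Lemma qfun_sscale (c : R) (a : state) : 0 <= c -> qfun (sscale c a) = c * qfun a.
Proof.
  intro Hc; destruct a as [a1 a2 a3 a4]; unfold qfun, sscale; cbn [sD sm1 sm2 sE].
  replace ((c * a1) ^ 2 + (c * a2) ^ 2 + (c * a3) ^ 2)
    with (c ^ 2 * (a1 ^ 2 + a2 ^ 2 + a3 ^ 2)) by ring.
  rewrite sqrt_mult by (apply pow2_ge_0 || apply sum3_sqr_ge0).
  rewrite sqrt_pow2 by exact Hc. ring.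
Qed.

Lemma qfun_sblend_ge (t : R) (a b : state) : 0 <= t <= 1 ->
  (1 - t) * qfun a + t * qfun b <= qfun (sblend t a b).
Proof.
  intro Ht; unfold sblend.
  rewrite <- (qfun_sscale (1 - t)), <- (qfun_sscale t) by lra.
  apply qfun_superadditive.
Qed.

Lemma inG_average4 (a b c d : state) : inG a -> inG b -> inG c -> inG d ->
  inG (sscale (1/4) (sadd (sadd a b) (sadd c d))).
Proof.
  intros [Da Qa] [Db Qb] [Dc Qc] [Dd Qd]; split.
  - cbn; lra.
  - rewrite qfun_sscale by lra.
    pose proof (qfun_superadditive a b); pose proof (qfun_superadditive c d).
    pose proof (qfun_superadditive (sadd a b) (sadd c d)). lra.
Qed.

Lemma theta_coef_range (eps alow a : R) : eps <= alow ->
  0 <= theta_coef eps alow a <= 1.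
Proof.
  intro Hlow; unfold theta_coef; destruct (Rlt_dec a eps) as [Ha | Ha]; [| lra].
  split.
  - apply Rmult_le_pos; [lra | left; apply Rinv_0_lt_compat; lra].
  - apply (Rmult_le_reg_r (alow - a)); [lra |]. field_simplify; lra.
Qed.

Lemma theta_coef_spec (eps alow a t : R) : eps <= alow ->
  0 <= t <= theta_coef eps alow a -> eps <= (1 - t) * alow + t * a.
Proof.
  intros Hlow Ht; unfold theta_coef in Ht.
  destruct (Rlt_dec a eps) as [Ha | Ha]; [| nra].
  assert (t * (alow - a) <= alow - eps).
  { replace (alow - eps) with ((alow - eps) / (alow - a) * (alow - a)) by (field; lra).
    apply Rmult_le_compat_r; lra. }
  nra.
Qed.

Lemma Rmin_theta_coef_l (eps1 a1 b1 eps2 a2 b2 : R) : eps1 <= a1 -> eps2 <= a2 ->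
  0 <= Rmin (theta_coef eps1 a1 b1) (theta_coef eps2 a2 b2) <= theta_coef eps1 a1 b1.
Proof.
  intros H1 H2; pose proof (theta_coef_range eps1 a1 b1 H1).
  pose proof (theta_coef_range eps2 a2 b2 H2).
  split; [apply Rmin_glb; lra | apply Rmin_l].
Qed.

Lemma Rmin_theta_coef_r (eps1 a1 b1 eps2 a2 b2 : R) : eps1 <= a1 -> eps2 <= a2 ->
  0 <= Rmin (theta_coef eps1 a1 b1) (theta_coef eps2 a2 b2) <= theta_coef eps2 a2 b2.
Proof.
  intros H1 H2; rewrite Rmin_comm; exact (Rmin_theta_coef_l _ _ b2 _ _ b1 H2 H1).
Qed.

Lemma sblend_admissible (epsD epsq t : R) (Ulow UD : state) :
  0 < epsD -> 0 < epsq -> epsD <= sD Ulow -> epsD <= sD UD -> epsq <= qfun Ulow ->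
  0 <= t <= theta_coef epsq (qfun Ulow) (qfun UD) -> inG (sblend t Ulow UD).
Proof.
  intros HD HQ DUlow DUD QUlow Ht.
  pose proof (theta_coef_range epsq (qfun Ulow) (qfun UD) QUlow).
  split.
  - cbn; nra.
  - pose proof (qfun_sblend_ge t Ulow UD ltac:(lra)).
    pose proof (theta_coef_spec epsq (qfun Ulow) (qfun UD) t QUlow Ht). lra.
Qed.

Section Limited_states.

Variable S : step_data.
Hypothesis epsD_pos : 0 < epsD S.
Hypothesis epsq_pos : 0 < epsq S.
Hypothesis low_density_ge :
  forall i j, epsD S <= sD (Uplus S (Flow S) i j) /\ epsD S <= sD (Uminus S (Flow S) i j) /\
              epsD S <= sD (Utplus S (Glow S) i j) /\ epsD S <= sD (Utminus S (Glow S) i j).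
Hypothesis low_q_ge :
  forall i j, epsq S <= qfun (Uplus S (Flow S) i j) /\ epsq S <= qfun (Uminus S (Flow S) i j) /\
              epsq S <= qfun (Utplus S (Glow S) i j) /\ epsq S <= qfun (Utminus S (Glow S) i j).

Lemma Uplus_FPCP_admissible (i j : Z) : inG (Uplus S (FPCP S) i j).
Proof.
  destruct (low_density_ge i j) as [D1 _], (low_density_ge (i + 1) j) as [_ [D2 _]].
  destruct (low_q_ge i j) as [Q1 _], (low_q_ge (i + 1) j) as [_ [Q2 _]].
  assert (Hblend : Uplus S (FPCP S) i j =
                   sblend (thetaqx S i j) (Uplus S (Flow S) i j) (Uplus S (FD S) i j))
    by (unfold Uplus, FPCP, sblend, ssub, sadd, sscale; cbn; f_equal; ring).
  assert (HD : epsD S <= sD (Uplus S (FD S) i j)).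
  { replace (sD (Uplus S (FD S) i j)) with
      ((1 - thetaDx S i j) * sD (Uplus S (Flow S) i j)
       + thetaDx S i j * sD (Uplus S (Fhigh S) i j))
      by (unfold Uplus, FD, ssub, sadd, sscale; cbn; ring).
    apply theta_coef_spec; [exact D1 | apply Rmin_theta_coef_l; assumption]. }
  rewrite Hblend; apply (sblend_admissible (epsD S) (epsq S)); try assumption.
  apply Rmin_theta_coef_l; assumption.
Qed.

Lemma Uminus_FPCP_admissible (i j : Z) : inG (Uminus S (FPCP S) i j).
Proof.
  destruct (low_density_ge (i - 1) j) as [D1 _], (low_density_ge i j) as [_ [D2 _]].
  destruct (low_q_ge (i - 1) j) as [Q1 _], (low_q_ge i j) as [_ [Q2 _]].
  assert (Ei : (i - 1 + 1)%Z = i) by ring.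
  assert (Hblend : Uminus S (FPCP S) i j =
                   sblend (thetaqx S (i - 1) j) (Uminus S (Flow S) i j) (Uminus S (FD S) i j))
    by (unfold Uminus, FPCP, sblend, ssub, sadd, sscale; cbn; f_equal; ring).
  assert (HD : epsD S <= sD (Uminus S (FD S) i j)).
  { replace (sD (Uminus S (FD S) i j)) with
      ((1 - thetaDx S (i - 1) j) * sD (Uminus S (Flow S) i j)
       + thetaDx S (i - 1) j * sD (Uminus S (Fhigh S) i j))
      by (unfold Uminus, FD, ssub, sadd, sscale; cbn; ring).
    apply theta_coef_spec; [exact D2 |].
    unfold thetaDx; rewrite Ei; apply Rmin_theta_coef_r; assumption. }
  rewrite Hblend; apply (sblend_admissible (epsD S) (epsq S)); try assumption.
  unfold thetaqx; rewrite Ei; apply Rmin_theta_coef_r; assumption.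
Qed.

Lemma Utplus_GPCP_admissible (i j : Z) : inG (Utplus S (GPCP S) i j).
Proof.
  destruct (low_density_ge i j) as [_ [_ [D1 _]]], (low_density_ge i (j + 1)) as [_ [_ [_ D2]]].
  destruct (low_q_ge i j) as [_ [_ [Q1 _]]], (low_q_ge i (j + 1)) as [_ [_ [_ Q2]]].
  assert (Hblend : Utplus S (GPCP S) i j =
                   sblend (thetaqy S i j) (Utplus S (Glow S) i j) (Utplus S (GD S) i j))
    by (unfold Utplus, GPCP, sblend, ssub, sadd, sscale; cbn; f_equal; ring).
  assert (HD : epsD S <= sD (Utplus S (GD S) i j)).
  { replace (sD (Utplus S (GD S) i j)) with
      ((1 - thetaDy S i j) * sD (Utplus S (Glow S) i j)
       + thetaDy S i j * sD (Utplus S (Ghigh S) i j))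
      by (unfold Utplus, GD, ssub, sadd, sscale; cbn; ring).
    apply theta_coef_spec; [exact D1 | apply Rmin_theta_coef_l; assumption]. }
  rewrite Hblend; apply (sblend_admissible (epsD S) (epsq S)); try assumption.
  apply Rmin_theta_coef_l; assumption.
Qed.

Lemma Utminus_GPCP_admissible (i j : Z) : inG (Utminus S (GPCP S) i j).
Proof.
  destruct (low_density_ge i (j - 1)) as [_ [_ [D1 _]]], (low_density_ge i j) as [_ [_ [_ D2]]].
  destruct (low_q_ge i (j - 1)) as [_ [_ [Q1 _]]], (low_q_ge i j) as [_ [_ [_ Q2]]].
  assert (Ej : (j - 1 + 1)%Z = j) by ring.
  assert (Hblend : Utminus S (GPCP S) i j =
                   sblend (thetaqy S i (j - 1)) (Utminus S (Glow S) i j) (Utminus S (GD S) i j))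
    by (unfold Utminus, GPCP, sblend, ssub, sadd, sscale; cbn; f_equal; ring).
  assert (HD : epsD S <= sD (Utminus S (GD S) i j)).
  { replace (sD (Utminus S (GD S) i j)) with
      ((1 - thetaDy S i (j - 1)) * sD (Utminus S (Glow S) i j)
       + thetaDy S i (j - 1) * sD (Utminus S (Ghigh S) i j))
      by (unfold Utminus, GD, ssub, sadd, sscale; cbn; ring).
    apply theta_coef_spec; [exact D2 |].
    unfold thetaDy; rewrite Ej; apply Rmin_theta_coef_r; assumption. }
  rewrite Hblend; apply (sblend_admissible (epsD S) (epsq S)); try assumption.
  unfold thetaqy; rewrite Ej; apply Rmin_theta_coef_r; assumption.
Qed.

End Limited_states.

Lemma Unew_average (S : step_data) (Fs Gs : Z -> Z -> state) (i j : Z) :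
  dx S i <> 0 -> dy S j <> 0 ->
  ssub (ssub (Ubar S i j) (sscale (dt S / dx S i) (ssub (Fs i j) (Fs (i - 1)%Z j))))
       (sscale (dt S / dy S j) (ssub (Gs i j) (Gs i (j - 1)%Z))) =
  sscale (1/4) (sadd (sadd (Uplus S Fs i j) (Uminus S Fs i j))
                     (sadd (Utplus S Gs i j) (Utminus S Gs i j))).
Proof.
  intros Hx Hy; unfold Uplus, Uminus, Utplus, Utminus, ssub, sadd, sscale; cbn.
  f_equal; field; split; assumption.
Qed.

Theorem theorem3 (S : step_data) :
  1 < Gam S <= 2 ->
  (forall i, 0 < dx S i) -> (forall j, 0 < dy S j) -> 0 < dt S ->
  (forall i j, prim_admissible (Wbar S i j)) ->
  (forall i j, Ubar S i j = cons (Gam S) (Wbar S i j)) ->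
  (forall i j, inG (Ubar S i j)) ->
  (* CFL: dt <= 1/4 min (dx_i / alpha_{i+1/2,j}, dy_j / beta_{i,j+1/2}) *)
  (forall i j, 4 * dt S * alpha S i j <= dx S i) ->
  (forall i j, 4 * dt S * beta S i j <= dy S j) ->
  (* the low-order states are admissible *)
  (forall i j, inG (Uplus S (Flow S) i j) /\ inG (Uminus S (Flow S) i j) /\
               inG (Utplus S (Glow S) i j) /\ inG (Utminus S (Glow S) i j)) ->
  (* choice of the limiter thresholds *)
  0 < epsD S -> 0 < epsq S ->
  (forall i j, epsD S <= sD (Uplus S (Flow S) i j) /\ epsD S <= sD (Uminus S (Flow S) i j) /\
               epsD S <= sD (Utplus S (Glow S) i j) /\ epsD S <= sD (Utminus S (Glow S) i j)) ->
  (forall i j, epsq S <= qfun (Uplus S (Flow S) i j) /\ epsq S <= qfun (Uminus S (Flow S) i j) /\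
               epsq S <= qfun (Utplus S (Glow S) i j) /\ epsq S <= qfun (Utminus S (Glow S) i j)) ->
  forall i j,
    Unew S i j =
      sscale (1/4) (sadd (sadd (Uplus S (FPCP S) i j) (Uminus S (FPCP S) i j))
                         (sadd (Utplus S (GPCP S) i j) (Utminus S (GPCP S) i j)))
    /\ inG (Unew S i j).
Proof.
  intros _ Hdx Hdy _ _ _ _ _ _ _ HeD Heq HD Hq i j.
  assert (Havg := Unew_average S (FPCP S) (GPCP S) i j
                    (Rgt_not_eq _ _ (Hdx i)) (Rgt_not_eq _ _ (Hdy j))).
  fold (Unew S i j) in Havg.
  split; [exact Havg |]. rewrite Havg.
  apply inG_average4.
  - exact (Uplus_FPCP_admissible S HeD Heq HD Hq i j).
  - exact (Uminus_FPCP_admissible S HeD Heq HD Hq i j).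
  - exact (Utplus_GPCP_admissible S HeD Heq HD Hq i j).
  - exact (Utminus_GPCP_admissible S HeD Heq HD Hq i j).
Qed.
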